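(* Let $m\geq 7$ and let $\mathfrak{X}=\{A_0,A_1,A_2\}$ be a non-symmetric class $2$ association scheme of order $m$ (so $A_0=I_m$ and $A_2=A_1^T$). Let $B_1$ be the $(2m+1)\times(2m+1)$ matrix defined from $A_1$ as in the context below, let $B_0=I_{2m+1}$ and $B_2=B_1^T$. Then $\mathfrak{Y}=\{B_0,B_1,B_2\}$ is a non-symmetric class $2$ association scheme of order $2m+1$, the automorphism group $\operatorname{Aut}(\mathfrak{Y})$ is intransitive on $\{1,\dots,2m+1\}$, and hence $\mathfrak{Y}$ is non-schurian. Moreover, $\operatorname{Aut}(\mathfrak{Y})\cong\operatorname{Aut}(\mathfrak{X})$.
   Context: An association scheme of order $N$ is a set $\{A_0,\dots,A_d\}$ of $N\times N$ $0/1$-matrices such that $A_0=I_N$, $\sum_i A_i=J_N$ (all-ones matrix), each $A_i^T$ is in the set, and each product $A_iA_j$ is a linear combination of the $A_k$; $d$ is its class. It is non-symmetric of class $2$ if $d=2$ and $A_1^T=A_2\neq A_1$. The automorphism group of $\{A_0,\dots,A_d\}$ is $\{\sigma\in S_N : P_\sigma^TA_iP_\sigma=A_i \text{ for all } i\}$, where $P_\sigma$ is the permutation matrix of $\sigma$. A scheme is schurian if it arises as the set of adjacency matrices of the orbitals (orbits on pairs $(x,y)$ under $(x,y)^g=(x^g,y^g)$) of a transitive permutation group on $\{1,\dots,N\}$. Definition of $B_1$ (with $n=m+1$, indices $1\le i,j\le n-1$): $(B_1)_{i,j}=(A_1)_{ij}$, $(B_1)_{i,n}=0$, $(B_1)_{i,n+j}=(A_0+A_1)_{ij}$;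 $(B_1)_{n,j}=1$, $(B_1)_{n,n}=0$, $(B_1)_{n,n+j}=0$; $(B_1)_{n+i,j}=(A_1)_{ij}$, $(B_1)_{n+i,n}=1$, $(B_1)_{n+i,n+j}=(A_2)_{ij}$. In block form, $B_1=\begin{bmatrix} A_1 & \mathbf{0} & A_0+A_1\\ \mathbf{1}^T & 0 & \mathbf{0}^T\\ A_1 & \mathbf{1} & A_2\end{bmatrix}$ with blocks indexed by $\{1,\dots,n-1\},\{n\},\{n+1,\dots,2n-1\}$. *)

From mathcomp Require Import all_boot all_order all_algebra all_fingroup.
Set Implicit Arguments. Unset Strict Implicit. Unset Printing Implicit Defensive.
Import GRing.Theory.
Local Open Scope ring_scope.

Definition is01 (N : nat) (A : 'M[int]_N) := forall i j, A i j = 0 \/ A i j = 1.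

Definition is_assoc_scheme (N d : nat) (A : 'I_d.+1 -> 'M[int]_N) : Prop :=
  (forall i, is01 (A i)) /\
  (forall i, A i != 0) /\
  (forall i j, i != j -> A i != A j) /\
  A ord0 = 1%:M /\
  \sum_(i < d.+1) A i = const_mx 1 /\
  (forall i, exists j, (A i)^T = A j) /\
  (forall i j, exists c : 'I_d.+1 -> int, A i *m A j = \sum_k c k *: A k).

Definition fam3 (N : nat) (A0 A1 A2 : 'M[int]_N) : 'I_3 -> 'M[int]_N :=
  fun i => match val i with 0%N => A0 | 1%N => A1 | _ => A2 end.

Definition nonsym_class2 (N : nat) (A0 A1 A2 : 'M[int]_N) : Prop :=
  [/\ is_assoc_scheme (fam3 A0 A1 A2), A1^T = A2 & A2 != A1].

Definition AutS (N d : nat) (A : 'I_d.+1 -> 'M[int]_N) : {set {perm 'I_N}} :=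
  [set s | [forall i, (perm_mx s)^T *m A i *m perm_mx s == A i]].

Definition transitive_on_points (N : nat) (G : {set {perm 'I_N}}) : Prop :=
  forall x y : 'I_N, exists2 g, g \in G & g x = y.

Definition orbital_mx (N : nat) (G : {set {perm 'I_N}}) (x y : 'I_N) : 'M[int]_N :=
  \matrix_(u, v) ((u, v) \in [set ((g : {perm 'I_N}) x, g y) | g in G])%:R.

Definition schurian (N d : nat) (A : 'I_d.+1 -> 'M[int]_N) : Prop :=
  exists G : {group {perm 'I_N}},
    [/\ transitive_on_points G,
        forall i, exists x y, A i = orbital_mx G x y &
        forall x y, exists i, orbital_mx G x y = A i].

Definition ent (m : nat) (A : 'M[int]_m) (i j : nat) : int :=
  match @insub _ (fun k => k < m)%N 'I_m i, @insub _ (fun k => k < m)%N 'I_m j with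
  | Some i', Some j' => A i' j'
  | _, _ => 0
  end.

(* B_1 of size 2m+1 = 2n-1 (n = m+1), 0-based indices: block {0..m-1},
   the point m (the paper's n), block {m+1..2m}. *)
Definition B1 (m : nat) (A0 A1 A2 : 'M[int]_m) : 'M[int]_(2 * m + 1) :=
  \matrix_(i, j)
    if (i < m)%N then
      (if (j < m)%N then ent A1 i j
       else if j == m :> nat then 0 else ent (A0 + A1) i (j - m.+1))
    else if i == m :> nat then
      (if (j < m)%N then 1 else 0)
    else
      (if (j < m)%N then ent A1 (i - m.+1) j
       else if j == m :> nat then 1 else ent A2 (i - m.+1) (j - m.+1)).

From mathcomp Require Import all_boot all_order all_algebra all_fingroup.
From mathcomp Require Import zify ring.
Set Implicit Arguments. Unset Strict Implicit. Unset Printing Implicit Defensive.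
Import GRing.Theory Num.Theory.
Local Open Scope ring_scope.

(* A non-symmetric class 2 scheme {I, A, A^T} is the same thing as a doubly
   regular tournament [A]: a 0/1 matrix with [A + A^T = J - I], all in- and
   out-degrees equal to [2l+1], and [A^2 = l A + (l+1) A^T].
   The matrix [B1] built from [A] is a doubly regular tournament with
   parameter [2l+1] ([doubling_drt]); this gives the scheme Y.  The central
   point [mid] is the only vertex of [B1] with a certain "twin" property
   ([twin_mid], [no_twin_lo], [no_twin_hi]), so every automorphism fixes it
   ([aut_fix_mid]): Aut(Y) is intransitive and Y is not schurian
   ([intransitive_not_schurian]).  Finally the automorphisms of Y are exactly
   the extensions of those of [A] acting alike on both blocks
   ([aut_B1_isog]). *)

Lemma sum_delta_l n (F : 'I_n -> int) i : \sum_z (i == z)%:R * F z = F i.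
Proof.
rewrite (bigD1 i) //= eqxx mul1r big1 ?addr0 // => z.
by rewrite eq_sym => /negbTE ->; rewrite mul0r.
Qed.

Lemma sum_delta_r n (F : 'I_n -> int) i : \sum_z F z * (z == i)%:R = F i.
Proof. by rewrite -(sum_delta_l F i); apply: eq_bigr => z _; rewrite mulrC eq_sym. Qed.

Lemma sum_delta_row n (i : 'I_n) : \sum_z (i == z)%:R = 1 :> int.
Proof. by rewrite -[RHS](sum_delta_l (fun _ => 1) i); apply: eq_bigr => z _; rewrite mulr1. Qed.

Lemma sum_delta_col n (i : 'I_n) : \sum_z (z == i)%:R = 1 :> int.
Proof. by rewrite -(sum_delta_row i); apply: eq_bigr => z _; rewrite eq_sym. Qed.

Lemma sum_off_r n (F : 'I_n -> int) x : \sum_z F z * (z != x)%:R = \sum_z F z - F x.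
Proof.
rewrite (bigD1 x) //= eqxx mulr0 add0r [X in _ = X - _](bigD1 x) //= addrC addrK.
by apply: eq_bigr => z /negbTE ->; rewrite mulr1.
Qed.

Lemma sum_off_l n (F : 'I_n -> int) x : \sum_z (z != x)%:R * F z = \sum_z F z - F x.
Proof. by rewrite -sum_off_r; apply: eq_bigr => z _; rewrite mulrC. Qed.

Lemma exists_nonzero_term n (F : 'I_n -> int) : \sum_z F z != 0 -> exists z, F z != 0.
Proof.
move=> h; apply/existsP; apply: contraR h => /existsPn H.
by rewrite big1 // => z _; have := H z; rewrite negbK => /eqP.
Qed.

Section Tournament.
Variables (N : nat) (A : 'M[int]_N).
Hypothesis A01 : forall i j, A i j = 0 \/ A i j = 1.
Hypothesis Askew : forall i j, A i j + A j i = (i != j)%:R.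

Lemma tour_delta i j : (i == j)%:R + A i j + A j i = 1.
Proof. by rewrite -addrA Askew; case: (i == j). Qed.

Lemma tour_diag i : A i i = 0.
Proof. by have := Askew i i; rewrite eqxx /=; lia. Qed.

Lemma tour_opp i j : A j i = (i != j)%:R - A i j.
Proof. by rewrite -(Askew i j); ring. Qed.

Lemma tour_xor i j : A i j * A j i = 0.
Proof.
have := Askew i j; case: (A01 i j) => ->; case: (A01 j i) => -> //=.
by case: (i != j).
Qed.

Lemma tour_sqr i j : A i j * A i j = A i j.
Proof. by case: (A01 i j) => ->. Qed.

Lemma tour_arc_neq i j : A i j = 1 -> i != j.
Proof. by move=> h; apply/eqP => e; move: h; rewrite e tour_diag. Qed.

Lemma tour_rev i j : A i j = 1 -> A j i = 0.
Proof. by move=> h; have := tour_xor i j; rewrite h mul1r. Qed.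

End Tournament.

Record doubly_regular N (A : 'M[int]_N) (l : int) : Prop := DoublyRegular {
  drt01 : forall i j, A i j = 0 \/ A i j = 1;
  drt_skew : forall i j, A i j + A j i = (i != j)%:R;
  drt_row : forall i, \sum_j A i j = 2 * l + 1;
  drt_col : forall j, \sum_i A i j = 2 * l + 1;
  drt_sq : forall i j, \sum_z A i z * A z j = l * A i j + (l + 1) * A j i }.

Section DoublyRegular.
Variables (N : nat) (A : 'M[int]_N) (l : int).
Hypothesis HA : doubly_regular A l.

Lemma drt_rows i j : \sum_z A i z * A j z = 2 * l + 1 - (l + 1) * (A i j + A j i).
Proof.
transitivity (\sum_z A i z * ((z != j)%:R - A z j)).
  by apply: eq_bigr => z _; rewrite (tour_opp (drt_skew HA) z j).
under eq_bigr do rewrite mulrBr.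
by rewrite sumrB sum_off_r (drt_row HA) (drt_sq HA); ring.
Qed.

Lemma drt_cols i j : \sum_z A z i * A z j = 2 * l + 1 - (l + 1) * (A i j + A j i).
Proof.
transitivity (\sum_z ((z != i)%:R - A i z) * A z j).
  by apply: eq_bigr => z _; rewrite (tour_opp (drt_skew HA) i z) eq_sym.
under eq_bigr do rewrite mulrBl.
by rewrite sumrB sum_off_l (drt_col HA) (drt_sq HA); ring.
Qed.

Lemma drt_sq_swap i j : \sum_z A z i * A j z = l * A j i + (l + 1) * A i j.
Proof. by rewrite -(drt_sq HA); apply: eq_bigr => z _; rewrite mulrC. Qed.

Lemma drt_order (i : 'I_N) : (N%:R : int) = 4 * l + 3.
Proof.
have : \sum_j (A i j + A j i) = \sum_j (i != j)%:R.
  by apply: eq_bigr => j _; rewrite (drt_skew HA).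
rewrite big_split /= (drt_row HA) (drt_col HA).
rewrite (eq_bigr (fun j => 1 * (j != i)%:R)) => [|j _]; last by rewrite mul1r eq_sym.
by rewrite sum_off_r sumr_const card_ord; lia.
Qed.

End DoublyRegular.

Section DoublyRegularPos.
Variables (N : nat) (A : 'M[int]_N) (l : int).
Hypothesis HA : doubly_regular A l.
Hypothesis Hl : 1 <= l.

Lemma drt_arc_one i j : A i j != 0 -> A i j = 1.
Proof. by case: (drt01 HA i j) => ->. Qed.

Lemma drt_arcs_one i j i' j' : A i j * A i' j' != 0 -> A i j = 1 /\ A i' j' = 1.
Proof. by case: (drt01 HA i j) => ->; case: (drt01 HA i' j') => ->. Qed.

Lemma drt_out x : exists y, A x y = 1.
Proof.
have [y /drt_arc_one] : exists y, A x y != 0.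
  by apply: exists_nonzero_term; rewrite (drt_row HA); lia.
by exists y.
Qed.

(* The ends of an arc have [l >= 1] common out-neighbours. *)
Lemma drt_common x y : A x y = 1 -> exists z, A x z = 1 /\ A y z = 1.
Proof.
move=> xy; have [z /drt_arcs_one] : exists z, A x z * A y z != 0.
  apply: exists_nonzero_term; rewrite (drt_rows HA) xy.
  by rewrite (tour_rev (drt01 HA) (drt_skew HA) xy); lia.
by exists z.
Qed.

(* An arc [y -> w] lies on [l + 1 >= 2] directed triangles, so a triangle
   [w -> x -> y -> w] has a second path [w -> z -> y] avoiding [x]. *)
Lemma drt_triangle w x y : A w x = 1 -> A x y = 1 -> A y w = 1 ->
  exists z, [/\ z != x, A w z = 1 & A z y = 1].
Proof.
move=> wx xy yw; have wy := tour_rev (drt01 HA) (drt_skew HA) yw.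
have [z] : exists z, (z != x)%:R * (A w z * A z y) != 0.
  apply: exists_nonzero_term; rewrite (sum_off_l (fun z => A w z * A z y)).
  by rewrite (drt_sq HA) wx xy wy yw; lia.
case: (boolP (z != x)) => [zx | _]; last by rewrite mulr0n mul0r eqxx.
by rewrite mulr1n mul1r => /drt_arcs_one [wz zy]; exists z.
Qed.

End DoublyRegularPos.

Definition o1 : 'I_3 := @Ordinal 3 1 isT.
Definition o2 : 'I_3 := @Ordinal 3 2 isT.

Lemma I3P (i : 'I_3) : [\/ i = ord0, i = o1 | i = o2].
Proof.
case: i => [[|[|[|n]]] Hi] //; [apply: Or31 | apply: Or32 | apply: Or33];
  exact: val_inj.
Qed.

Lemma fam3_0 N (X0 X1 X2 : 'M[int]_N) : fam3 X0 X1 X2 ord0 = X0. Proof. by []. Qed.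
Lemma fam3_1 N (X0 X1 X2 : 'M[int]_N) : fam3 X0 X1 X2 o1 = X1. Proof. by []. Qed.
Lemma fam3_2 N (X0 X1 X2 : 'M[int]_N) : fam3 X0 X1 X2 o2 = X2. Proof. by []. Qed.
Definition fam3E := (fam3_0, fam3_1, fam3_2).

Lemma fam3_lin N (X0 X1 X2 : 'M[int]_N) (c : 'I_3 -> int) :
  \sum_k c k *: fam3 X0 X1 X2 k = c ord0 *: X0 + c o1 *: X1 + c o2 *: X2.
Proof.
rewrite !big_ord_recl big_ord0 addr0 /= addrA.
by congr (c _ *: _ + c _ *: _ + c _ *: _); apply: val_inj.
Qed.

Lemma fam3_sum N (X0 X1 X2 : 'M[int]_N) : \sum_k fam3 X0 X1 X2 k = X0 + X1 + X2.
Proof. by rewrite !big_ord_recl big_ord0 addr0 /= addrA. Qed.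

Definition in_span3 N (Y M : 'M[int]_N) : Prop :=
  exists c0 c1 c2 : int, forall u v,
    M u v = c0 * (u == v)%:R + c1 * Y u v + c2 * Y v u.

Lemma in_span3_fam3 N (Y M : 'M[int]_N) : in_span3 Y M ->
  exists c : 'I_3 -> int, M = \sum_k c k *: fam3 1%:M Y Y^T k.
Proof.
case=> c0 [c1 [c2 H]]; exists [fun k : 'I_3 => c2 with ord0 |-> c0, o1 |-> c1].
by rewrite fam3_lin; apply/matrixP => u v; rewrite H !mxE.
Qed.

(* Every doubly regular tournament with at least one arc is the first
   relation of a non-symmetric class 2 association scheme: the span of
   [I, A, A^T] is closed under products by [drt_sq], [drt_rows], [drt_cols]. *)
Lemma drt_scheme N (A : 'M[int]_N) l u0 v0 :
  doubly_regular A l -> A u0 v0 = 1 -> nonsym_class2 1%:M A A^T.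
Proof.
move=> HA arc; have skew := drt_skew HA; have delta := tour_delta skew.
have span_mul i j : in_span3 A (fam3 1%:M A A^T i *m fam3 1%:M A A^T j).
  have sym_span : in_span3 A (A *m A^T) /\ in_span3 A (A^T *m A).
    split; exists (2 * l + 1), l, l => u v; rewrite mxE;
      under eq_bigr do rewrite mxE.
    - by rewrite (drt_rows HA); have := delta u v; lia.
    - by rewrite (drt_cols HA); have := delta u v; lia.
  case: (I3P i) => ->; case: (I3P j) => ->; rewrite !fam3E ?mul1mx ?mulmx1;
    try by [case: sym_span | exists 1, 0, 0 => u v; rewrite mxE; ring
           | exists 0, 1, 0 => u v; ring | exists 0, 0, 1 => u v; rewrite mxE; ring].
  - by exists 0, l, (l + 1) => u v; rewrite mxE (drt_sq HA); ring.
  - exists 0, (l + 1), l => u v; rewrite -trmx_mul !mxE (drt_sq HA); ring.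
have rev := tour_rev (drt01 HA) skew arc.
have I_ne (M : 'M[int]_N) : M u0 u0 = 0 -> 1%:M != M.
  by move=> h; apply/eqP => /matrixP /(_ u0 u0); rewrite h mxE eqxx.
have I_ne_A : 1%:M != A by rewrite I_ne ?(tour_diag skew).
have I_ne_AT : 1%:M != A^T by rewrite I_ne ?mxE ?(tour_diag skew).
have A_ne_AT : A != A^T by apply/eqP => /matrixP /(_ u0 v0); rewrite mxE arc rev.
split=> //; last by rewrite eq_sym.
split; [|split; [|split; [|split; [|split; [|split]]]]] => //.
- move=> i; case: (I3P i) => -> u v; rewrite fam3E ?mxE;
    [by case: (u == v); [right | left] | exact: drt01 HA u v | exact: drt01 HA v u].
- move=> i; case: (I3P i) => ->; rewrite fam3E; apply/eqP => /matrixP.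
  + by move=> /(_ u0 u0); rewrite !mxE eqxx.
  + by move=> /(_ u0 v0); rewrite !mxE arc.
  + by move=> /(_ v0 u0); rewrite !mxE arc.
- move=> i j; case: (I3P i) => ->; case: (I3P j) => -> // _;
    by rewrite !fam3E 1?eq_sym ?I_ne_A ?I_ne_AT ?A_ne_AT.
- by rewrite fam3_sum; apply/matrixP => u v; rewrite !mxE delta.
- move=> i; case: (I3P i) => ->; [exists ord0 | exists o2 | exists o1];
    by rewrite !fam3E ?tr_scalar_mx ?trmxK.
- by move=> i j; apply: in_span3_fam3.
Qed.

Section SpanTournament.
Variables (N : nat) (A : 'M[int]_N) (i0 i1 : 'I_N) (c0 c1 c2 d0 d1 d2 : int).
Hypothesis A01 : forall i j, A i j = 0 \/ A i j = 1.
Hypothesis Askew : forall i j, A i j + A j i = (i != j)%:R.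
Hypothesis i01 : i0 != i1.
Hypothesis Asq : forall i j,
  \sum_z A i z * A z j = c0 * (i == j)%:R + c1 * A i j + c2 * A j i.
Hypothesis Arows : forall i j,
  \sum_z A i z * A j z = d0 * (i == j)%:R + d1 * A i j + d2 * A j i.

(* The diagonal of [A A^T] gives the out-degrees. *)
Lemma span_row i : \sum_j A i j = d0.
Proof.
have := Arows i i; rewrite eqxx (tour_diag Askew) !mulr0 !addr0 mulr1 => <-.
by apply: eq_bigr => j _; rewrite tour_sqr.
Qed.

(* Counting the arcs by tails and by heads: [N d0 = N (N - 1 - d0)]. *)
Lemma span_order : (N%:R : int) = 2 * d0 + 1.
Proof.
have col j : \sum_i A i j = N%:R - 1 - d0.
  under eq_bigr do rewrite (tour_opp Askew j) eq_sym.
  rewrite sumrB span_row (eq_bigr (fun i => 1 * (i != j)%:R)) => [|i _].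
    by rewrite sum_off_r sumr_const card_ord.
  by rewrite mul1r.
have : \sum_i \sum_j A i j = \sum_j \sum_i A i j by rewrite exchange_big.
under eq_bigr do rewrite span_row.
under [X in _ = X]eq_bigr do rewrite col.
rewrite !sumr_const card_ord => /eqP; rewrite eqrMn2r.
have -> : (N == 0)%N = false by apply/negbTE; rewrite -lt0n (leq_ltn_trans _ (ltn_ord i0)).
by move=> /eqP; lia.
Qed.

Lemma span_col j : \sum_i A i j = d0.
Proof.
under eq_bigr do rewrite (tour_opp Askew j) eq_sym.
rewrite sumrB span_row (eq_bigr (fun i => 1 * (i != j)%:R)) => [|i _]; last by rewrite mul1r.
by rewrite sum_off_r sumr_const card_ord span_order; lia.
Qed.

(* The diagonal of [A^2] vanishes, so [c0 = 0]. *)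
Lemma span_c0 : c0 = 0.
Proof.
have := Asq i0 i0; rewrite eqxx (tour_diag Askew) !mulr0 !addr0 mulr1.
by rewrite big1 // => z _; rewrite tour_xor.
Qed.

(* [A A^T] is symmetric while [A A^T = d0 J - A - A^2] (as [A J = d0 J]);
   comparing its entries at an arc gives [c2 = c1 + 1]. *)
Lemma span_c2 : c2 = c1 + 1.
Proof.
have AAT i j : \sum_z A i z * A j z = d0 - A i j - (c1 * A i j + c2 * A j i).
  transitivity (\sum_z A i z * ((z != j)%:R - A z j)).
    by apply: eq_bigr => z _; rewrite (tour_opp Askew z j).
  under eq_bigr do rewrite mulrBr.
  by rewrite sumrB sum_off_r span_row Asq span_c0 mul0r add0r.
have := AAT i0 i1; rewrite (eq_bigr (fun z => A i1 z * A i0 z)) => [|z _]; last by rewrite mulrC.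
rewrite AAT; have := Askew i0 i1; rewrite i01.
by case: (A01 i0 i1) => ->; case: (A01 i1 i0) => -> /=; lia.
Qed.

(* Summing the row [i0] of [A^2] gives [d0^2 = (c1 + c2) d0]. *)
Lemma span_d0 : d0 = 2 * c1 + 1.
Proof.
have : \sum_j \sum_z A i0 z * A z j = \sum_j (c1 * A i0 j + c2 * A j i0).
  by apply: eq_bigr => j _; rewrite Asq span_c0 mul0r add0r.
rewrite exchange_big /= big_split /= -!mulr_sumr span_row span_col.
under eq_bigr do rewrite -mulr_sumr span_row.
rewrite -mulr_suml span_row span_c2 => /eqP.
have d0_gt0 : 0 < d0.
  have : (1 < N)%N by move: i01 (ltn_ord i0) (ltn_ord i1); rewrite -val_eqE /=; lia.
  by have := span_order; lia.
by move=> /eqP h; apply: (mulIf (lt0r_neq0 d0_gt0)); rewrite h; ring.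
Qed.

Lemma span_drt : doubly_regular A c1.
Proof.
split => //.
- by move=> i; rewrite span_row span_d0.
- by move=> j; rewrite span_col span_d0.
- by move=> i j; rewrite Asq span_c0 span_c2 mul0r add0r.
Qed.

End SpanTournament.

(* The first relation of a non-symmetric class 2 association scheme is a
   tournament, and the scheme axioms put [A1 A1] and [A1 A1^T] in its span,
   so [A1] is doubly regular; the order [4l+3 >= 7] forces [l >= 1]. *)
Lemma class2_drt m (A0 A1 A2 : 'M[int]_m) :
  (7 <= m)%N -> nonsym_class2 A0 A1 A2 ->
  [/\ A0 = 1%:M, A2 = A1^T & exists2 l, doubly_regular A1 l & 1 <= l].
Proof.
move=> m7 [[H01 [_ [_ [H0 [Hsum [_ Hprod]]]]]] HT _].
rewrite fam3_0 in H0; subst A0 A2.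
have A01 i j : A1 i j = 0 \/ A1 i j = 1 by have := H01 o1 i j.
have Askew i j : A1 i j + A1 j i = (i != j)%:R.
  move/matrixP: Hsum => /(_ i j); rewrite fam3_sum !mxE.
  by case: (i == j) => /= h; lia.
have span a b : exists c0 c1 c2 : int, forall i j,
    \sum_z fam3 1%:M A1 A1^T a i z * fam3 1%:M A1 A1^T b z j
      = c0 * (i == j)%:R + c1 * A1 i j + c2 * A1 j i.
  have [c Hc] := Hprod a b; exists (c ord0), (c o1), (c o2) => i j.
  move/matrixP: Hc => /(_ i j); rewrite fam3_lin !mxE => <-.
  by apply: eq_bigr => z _.
have [c0 [c1 [c2 Asq]]] := span o1 o1.
have [d0 [d1 [d2 AAT]]] := span o1 o2.
rewrite !fam3E in Asq AAT.
have Arows i j : \sum_z A1 i z * A1 j z = d0 * (i == j)%:R + d1 * A1 i j + d2 * A1 j i.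
  by rewrite -AAT; apply: eq_bigr => z _; rewrite mxE.
have m1 : (1 < m)%N by lia.
have i01 : Ordinal (ltnW m1) != Ordinal m1 by [].
have HA := span_drt A01 Askew i01 Asq Arows.
split => //; exists c1 => //.
by have := drt_order HA (Ordinal m1); lia.
Qed.

(* The vertices [0 .. 2m] of [B1] form three blocks: [lo i] = i (the paper's
   [1 .. n-1]), the point [mid] = m (the paper's [n]) and [hi i] = m+1+i. *)
Lemma lo_proof m (i : 'I_m) : (i < 2 * m + 1)%N. Proof. by have := ltn_ord i; lia. Qed.
Lemma mid_proof m : (m < 2 * m + 1)%N. Proof. by lia. Qed.
Lemma hi_proof m (i : 'I_m) : (m.+1 + i < 2 * m + 1)%N. Proof. by have := ltn_ord i; lia. Qed.

Definition lo m (i : 'I_m) : 'I_(2 * m + 1) := Ordinal (lo_proof i).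
Definition mid m : 'I_(2 * m + 1) := Ordinal (mid_proof m).
Definition hi m (i : 'I_m) : 'I_(2 * m + 1) := Ordinal (hi_proof i).

Variant block_spec m : 'I_(2 * m + 1) -> Type :=
  | BlockLo i : block_spec (lo i)
  | BlockMid : block_spec (mid m)
  | BlockHi i : block_spec (hi i).

Lemma blockP m (u : 'I_(2 * m + 1)) : block_spec u.
Proof.
case: (ltnP u m) => [u_lo | u_ge].
  have -> : u = lo (Ordinal u_lo) by apply: val_inj.
  exact: BlockLo.
case: (eqVneq (u : nat) m) => [u_mid | u_ne].
  have -> : u = mid m by apply: val_inj.
  exact: BlockMid.
have u_hi : (u - m.+1 < m)%N by have := ltn_ord u; lia.
have -> : u = hi (Ordinal u_hi) by apply: val_inj => /=; lia.
exact: BlockHi.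
Qed.

Lemma hi_ltnF m (i : 'I_m) : (m.+1 + i < m)%N = false. Proof. by lia. Qed.
Lemma hi_eqF m (i : 'I_m) : (m.+1 + i == m) = false. Proof. by lia. Qed.

Lemma lo_inj m : injective (@lo m).
Proof. by move=> i j /(congr1 val) /= /val_inj. Qed.

Lemma eq_lo m (i j : 'I_m) : (lo i == lo j) = (i == j). Proof. by []. Qed.
Lemma eq_hi m (i j : 'I_m) : (hi i == hi j) = (i == j).
Proof. by rewrite -val_eqE /= eqn_add2l. Qed.
Lemma eq_lo_mid m (i : 'I_m) : (lo i == mid m) = false.
Proof. by apply/negbTE; rewrite -val_eqE /= neq_ltn ltn_ord. Qed.
Lemma eq_mid_lo m (i : 'I_m) : (mid m == lo i) = false.
Proof. by rewrite eq_sym eq_lo_mid. Qed.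
Lemma eq_lo_hi m (i j : 'I_m) : (lo i == hi j) = false.
Proof. by apply/negbTE; rewrite -val_eqE /=; have := ltn_ord i; lia. Qed.
Lemma eq_hi_lo m (i j : 'I_m) : (hi j == lo i) = false.
Proof. by rewrite eq_sym eq_lo_hi. Qed.
Lemma eq_mid_hi m (i : 'I_m) : (mid m == hi i) = false.
Proof. by apply/negbTE; rewrite -val_eqE /=; lia. Qed.
Lemma eq_hi_mid m (i : 'I_m) : (hi i == mid m) = false.
Proof. by rewrite eq_sym eq_mid_hi. Qed.

Definition eq_block :=
  (eq_lo, eq_hi, eq_lo_mid, eq_mid_lo, eq_lo_hi, eq_hi_lo, eq_mid_hi, eq_hi_mid).

Lemma sum_blocks m (F : 'I_(2 * m + 1) -> int) :
  \sum_u F u = \sum_(i < m) F (lo i) + F (mid m) + \sum_(i < m) F (hi i).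
Proof.
have E : (m + (1 + m) = 2 * m + 1)%N by lia.
rewrite (reindex (cast_ord E)) /=; last first.
  by exists (cast_ord (esym E)) => i _; rewrite ?cast_ordK ?cast_ordKV.
rewrite big_split_ord big_split_ord big_ord1 /= addrA.
congr (_ + _ + _).
- by apply: eq_bigr => i _; congr F; apply: val_inj.
- by congr F; apply: val_inj => /=; rewrite addn0.
- by apply: eq_bigr => i _; congr F; apply: val_inj => /=; rewrite addnA addn1.
Qed.

Lemma ent_ord m (A : 'M[int]_m) (i j : 'I_m) : ent A i j = A i j.
Proof.
rewrite /ent (insubT (fun k => (k < m)%N) (ltn_ord i)).
rewrite (insubT (fun k => (k < m)%N) (ltn_ord j)).
by congr (A _ _); apply: val_inj.
Qed.

Section B1Blocks.
Variables (m : nat) (A0 A1 A2 : 'M[int]_m).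
Local Notation B := (B1 A0 A1 A2).

Lemma B1_lo_lo i j : B (lo i) (lo j) = A1 i j.
Proof. by rewrite mxE /= !ltn_ord ent_ord. Qed.
Lemma B1_lo_mid i : B (lo i) (mid m) = 0.
Proof. by rewrite mxE /= ltn_ord ltnn eqxx. Qed.
Lemma B1_lo_hi i j : B (lo i) (hi j) = (A0 + A1) i j.
Proof. by rewrite mxE /= ltn_ord hi_ltnF hi_eqF addKn ent_ord. Qed.
Lemma B1_mid_lo j : B (mid m) (lo j) = 1.
Proof. by rewrite mxE /= ltnn eqxx ltn_ord. Qed.
Lemma B1_mid_mid : B (mid m) (mid m) = 0.
Proof. by rewrite mxE /= ltnn eqxx. Qed.
Lemma B1_mid_hi j : B (mid m) (hi j) = 0.
Proof. by rewrite mxE /= ltnn eqxx hi_ltnF. Qed.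
Lemma B1_hi_lo i j : B (hi i) (lo j) = A1 i j.
Proof. by rewrite mxE /= ltn_ord hi_ltnF hi_eqF addKn ent_ord. Qed.
Lemma B1_hi_mid i : B (hi i) (mid m) = 1.
Proof. by rewrite mxE /= ltnn eqxx hi_ltnF hi_eqF. Qed.
Lemma B1_hi_hi i j : B (hi i) (hi j) = A2 i j.
Proof. by rewrite mxE /= !hi_ltnF !hi_eqF !addKn ent_ord. Qed.

End B1Blocks.

Lemma B1_lo_hi_tr m (A : 'M[int]_m) i j : B1 1%:M A A^T (lo i) (hi j) = (i == j)%:R + A i j.
Proof. by rewrite B1_lo_hi !mxE. Qed.
Lemma B1_hi_hi_tr m (A : 'M[int]_m) i j : B1 1%:M A A^T (hi i) (hi j) = A j i.
Proof. by rewrite B1_hi_hi mxE. Qed.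

Definition B1E := (B1_lo_lo, B1_lo_mid, B1_lo_hi_tr, B1_mid_lo, B1_mid_mid,
                   B1_mid_hi, B1_hi_lo, B1_hi_mid, B1_hi_hi_tr).

Section Doubling.
Variables (m : nat) (A : 'M[int]_m) (l : int).
Hypothesis HA : doubly_regular A l.
Hypothesis Hm : (m%:R : int) = 4 * l + 3.
Local Notation Y := (B1 1%:M A A^T).

Lemma doubling01 u v : Y u v = 0 \/ Y u v = 1.
Proof.
case: (blockP u) => [i||i]; case: (blockP v) => [j||j]; rewrite !B1E;
  try exact: (drt01 HA _ _); try by [left | right].
by case: (eqVneq i j) => [<-|_]; rewrite ?(tour_diag (drt_skew HA)) ?add0r;
  [right | exact: (drt01 HA _ _)].
Qed.

Lemma doubling_skew u v : Y u v + Y v u = (u != v)%:R.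
Proof.
case: (blockP u) => [i||i]; case: (blockP v) => [j||j];
  rewrite !B1E ?eq_block ?eqxx //=.
all: rewrite ?[j == i]eq_sym; have := tour_delta (drt_skew HA) i j.
all: have := drt_skew HA i j; lia.
Qed.

Lemma doubling_row u : \sum_w Y u w = 2 * (2 * l + 1) + 1.
Proof.
rewrite sum_blocks; case: (blockP u) => [i||i]; rewrite !B1E;
  under eq_bigr do rewrite !B1E; under [X in _ + _ + X]eq_bigr do rewrite !B1E;
  rewrite ?big_split /= ?sum_delta_row ?sum_delta_col ?(drt_row HA) ?(drt_col HA) ?big1_eq
    ?sumr_const ?card_ord ?Hm; lia.
Qed.

Lemma doubling_col u : \sum_w Y w u = 2 * (2 * l + 1) + 1.
Proof.
rewrite sum_blocks; case: (blockP u) => [i||i]; rewrite !B1E;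
  under eq_bigr do rewrite !B1E; under [X in _ + _ + X]eq_bigr do rewrite !B1E;
  rewrite ?big_split /= ?sum_delta_row ?sum_delta_col ?(drt_row HA) ?(drt_col HA) ?big1_eq
    ?sumr_const ?card_ord ?Hm; lia.
Qed.

(* Entries of [Y^2] by blocks: after splitting the sum along the blocks, every
   block sum is one of [A J], [J A], [A^2], [A A^T], [A^T A], [A I], and the
   resulting identities in [A i j], [A j i], [(i == j)] hold because [A] is a
   tournament. *)
Lemma doubling_sq u v :
  \sum_w Y u w * Y w v = (2 * l + 1) * Y u v + (2 * l + 1 + 1) * Y v u.
Proof.
rewrite sum_blocks.
case: (blockP u) => [i||i]; case: (blockP v) => [j||j]; rewrite !B1E;
  under eq_bigr do rewrite !B1E ?mulr0 ?mul0r ?mulr1 ?mul1r ?mulrDl ?mulrDr;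
  under [X in _ + _ + X]eq_bigr do rewrite !B1E ?mulr0 ?mul0r ?mulr1 ?mul1r ?mulrDl ?mulrDr;
  rewrite ?mulr0 ?mul0r ?mulr1 ?mul1r ?big1_eq ?addr0 ?add0r ?big_split /=
    ?sum_delta_row ?sum_delta_col ?sum_delta_l ?sum_delta_r ?(drt_row HA) ?(drt_col HA)
    ?(drt_sq HA) ?(drt_sq_swap HA) ?(drt_rows HA) ?(drt_cols HA) //.
all: try (case: (eqVneq i j) => [<-|ij];
  [ rewrite ?eqxx ?(tour_diag (drt_skew HA)) /=; lia
  | have := drt_skew HA i j; rewrite ij ?(eq_sym j i) ?(negbTE ij) /=;
    case: (drt01 HA i j) => ->; case: (drt01 HA j i) => -> /=; lia ]).
all: lia.
Qed.

Lemma doubling_drt : doubly_regular Y (2 * l + 1).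
Proof.
by split; [exact: doubling01 | exact: doubling_skew | exact: doubling_row
          | exact: doubling_col | exact: doubling_sq].
Qed.

End Doubling.

Lemma conj_perm_mx N (s : {perm 'I_N}) (M : 'M[int]_N) u v :
  ((perm_mx s)^T *m M *m perm_mx s) u v = M ((s^-1)%g u) ((s^-1)%g v).
Proof.
rewrite tr_perm_mx -row_permE.
have -> : perm_mx s = perm_mx ((s^-1)^-1)%g by rewrite invgK.
by rewrite -col_permE !mxE.
Qed.

Lemma AutSP N d (F : 'I_d.+1 -> 'M[int]_N) (s : {perm 'I_N}) :
  reflect (forall i u v, F i (s u) (s v) = F i u v) (s \in AutS F).
Proof.
rewrite inE; apply: (iffP forallP) => H.
- move=> i u v; have /eqP/matrixP/(_ (s u) (s v)) := H i.
  by rewrite conj_perm_mx !permK.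
- move=> i; apply/eqP/matrixP => u v; rewrite conj_perm_mx.
  by rewrite -{2}(permKV s u) -{2}(permKV s v) H.
Qed.

(* [AutS F] is a group, which gives a meaning to [\isog]. *)
Lemma AutS_group N d (F : 'I_d.+1 -> 'M[int]_N) : group_set (AutS F).
Proof.
apply/group_setP; split; first by apply/AutSP => i u v; rewrite !perm1.
by move=> x y /AutSP Hx /AutSP Hy; apply/AutSP => i u v; rewrite !permM Hy Hx.
Qed.

Lemma AutS_fam3P N (M : 'M[int]_N) (s : {perm 'I_N}) :
  reflect (forall u v, M (s u) (s v) = M u v) (s \in AutS (fam3 1%:M M M^T)).
Proof.
apply: (iffP (AutSP _ _)) => [H u v | H i u v]; first exact: (H o1).
by case: (I3P i) => ->; rewrite !fam3E ?mxE ?H // (inj_eq perm_inj).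
Qed.

Definition twin_vertex N (Y : 'M[int]_N) (v : 'I_N) : Prop :=
  forall a, Y v a = 1 -> exists b, Y b v = 1 /\ forall c, Y v c = 1 -> Y a c = Y b c.

Lemma twin_vertex_aut N (Y : 'M[int]_N) (s : {perm 'I_N}) v :
  (forall u w, Y (s u) (s w) = Y u w) -> twin_vertex Y v -> twin_vertex Y (s v).
Proof.
move=> Hs tv a.
have pull u w : Y (s u) w = Y u ((s^-1)%g w) by rewrite -[in RHS]Hs permKV.
rewrite pull => /tv [b [bv same]]; exists (s b); split; first by rewrite Hs.
move=> c; rewrite pull => /same e.
by rewrite -(permKV s a) -(permKV s c) !Hs.
Qed.

(* In [B1 I A A^T] the point [mid] is the only twin vertex; every other
   vertex is excluded using common out-neighbours and triangles in the
   doubly regular tournament [A]. *)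
Section TwinVertex.
Variables (m : nat) (A : 'M[int]_m) (l : int).
Hypothesis HA : doubly_regular A l.
Hypothesis Hl : 1 <= l.
Local Notation Y := (B1 1%:M A A^T).

Let diag := tour_diag (drt_skew HA).
Let arc_rev := tour_rev (drt01 HA) (drt_skew HA).
Let arc_neq := tour_arc_neq (drt_skew HA).

(* The twin of [lo i] is [hi i]. *)
Lemma twin_mid : twin_vertex Y (mid m).
Proof.
move=> a; case: (blockP a) => [i||i]; rewrite !B1E // => _.
exists (hi i); rewrite !B1E; split => // c.
by case: (blockP c) => [j||j]; rewrite !B1E.
Qed.

Lemma no_twin_lo x : ~ twin_vertex Y (lo x).
Proof.
move=> tx; have [y xy] := drt_out HA Hl x.
have [b [bx same]] := tx (lo y) ltac:(by rewrite !B1E).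
have y_hiy : Y (lo y) (hi y) = 1 by rewrite !B1E eqxx diag.
have x_hiy : Y (lo x) (hi y) = 1 by rewrite !B1E (negbTE (arc_neq xy)) xy.
case: (blockP b) bx same => [w||w]; rewrite !B1E => wx same.
- have := same _ x_hiy; rewrite y_hiy !B1E.
  case: (eqVneq w y) => [wy | _]; first by move: wx; rewrite wy arc_rev.
  rewrite add0r => wy.
  by have := same (lo y); rewrite !B1E xy diag -wy => /(_ erefl).
- by have := same _ x_hiy; rewrite y_hiy !B1E.
- have := same (lo y); rewrite !B1E xy diag => /(_ erefl) wy.
  have yw : A y w = 1.
    have := drt_skew HA y w; rewrite -wy addr0.
    by case: (eqVneq y w) => [yw|//]; move: wx; rewrite -yw arc_rev.
  have [z [xz yz]] := drt_common HA Hl xy.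
  have := same (lo z); rewrite !B1E xz yz => /(_ erefl) wz.
  have := same (hi z); rewrite !B1E (negbTE (arc_neq xz)) (negbTE (arc_neq yz)) xz yz.
  by move=> /(_ erefl) zw; move: (arc_rev (esym wz)); rewrite -zw.
Qed.

Lemma no_twin_hi x : ~ twin_vertex Y (hi x).
Proof.
move=> tx; have [y xy] := drt_out HA Hl x.
have [b [bx same]] := tx (lo y) ltac:(by rewrite !B1E).
case: (blockP b) bx same => [w||w]; rewrite !B1E => wx same; last first.
- by have := same (mid m); rewrite !B1E => /(_ erefl).
- by [].
case: (eqVneq w x) wx same => [-> | _] wx same.
  by have := same (lo y); rewrite !B1E xy diag => /(_ erefl).
rewrite add0r in wx.
have := same (lo y); rewrite !B1E xy diag => /(_ erefl) wy.
have yw : A y w = 1.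
  have := drt_skew HA y w; rewrite -wy addr0.
  by case: (eqVneq y w) => [yw|//]; move: wx; rewrite -yw arc_rev.
have [z [zx wz zy]] := drt_triangle HA Hl wx xy yw.
have yz := arc_rev zy.
case: (drt01 HA x z) => xz.
- have zx1 : A z x = 1 by have := drt_skew HA z x; rewrite zx xz addr0.
  have := same (hi z); rewrite !B1E zx1 eq_sym (negbTE (arc_neq zy)) yz.
  by rewrite (negbTE (arc_neq wz)) wz => /(_ erefl).
- by have := same (lo z); rewrite !B1E xz yz wz => /(_ erefl).
Qed.

Lemma aut_fix_mid (s : {perm 'I_(2 * m + 1)}) :
  (forall u w, Y (s u) (s w) = Y u w) -> s (mid m) = mid m.
Proof.
move=> Hs; have := twin_vertex_aut Hs twin_mid.
by case: (blockP (s (mid m))) => [i /no_twin_lo | | i /no_twin_hi].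
Qed.

Lemma aut_B1_intransitive (i0 : 'I_m) : ~ transitive_on_points (AutS (fam3 1%:M Y Y^T)).
Proof.
move=> trans; have [g /AutS_fam3P g_aut g_mid] := trans (mid m) (lo i0).
by move: (aut_fix_mid g_aut); rewrite g_mid => /eqP; rewrite eq_lo_mid.
Qed.

End TwinVertex.

Definition ext_fun m (t : {perm 'I_m}) (u : 'I_(2 * m + 1)) : 'I_(2 * m + 1) :=
  if @insub _ (fun k => (k < m)%N) 'I_m (val u) is Some i then lo (t i)
  else if val u == m then mid m
  else if @insub _ (fun k => (k < m)%N) 'I_m (val u - m.+1)%N is Some i then hi (t i)
  else u.

Lemma insub_ord m (i : 'I_m) : @insub _ (fun k => (k < m)%N) 'I_m i = Some i.
Proof. by rewrite (insubT (fun k => (k < m)%N) (ltn_ord i)); congr Some; apply: val_inj. Qed.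

Lemma ext_fun_lo m (t : {perm 'I_m}) i : ext_fun t (lo i) = lo (t i).
Proof. by rewrite /ext_fun /= insub_ord. Qed.
Lemma ext_fun_mid m (t : {perm 'I_m}) : ext_fun t (mid m) = mid m.
Proof. by rewrite /ext_fun /= insubF ?ltnn ?eqxx. Qed.
Lemma ext_fun_hi m (t : {perm 'I_m}) i : ext_fun t (hi i) = hi (t i).
Proof.
rewrite /ext_fun /= insubF; last by apply/negbTE; rewrite -leqNgt; lia.
by rewrite hi_eqF addKn insub_ord.
Qed.

Lemma ext_fun_inj m (t : {perm 'I_m}) : injective (ext_fun t).
Proof.
by move=> u v; case: (blockP u) => [i||i]; case: (blockP v) => [j||j];
  rewrite ?(ext_fun_lo, ext_fun_mid, ext_fun_hi) // => /eqP;
  rewrite ?eq_block // => /eqP /perm_inj ->.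
Qed.

Definition ext m (t : {perm 'I_m}) : {perm 'I_(2 * m + 1)} := perm (@ext_fun_inj m t).

Lemma ext_lo m (t : {perm 'I_m}) i : ext t (lo i) = lo (t i).
Proof. by rewrite permE ext_fun_lo. Qed.
Lemma ext_mid m (t : {perm 'I_m}) : ext t (mid m) = mid m.
Proof. by rewrite permE ext_fun_mid. Qed.
Lemma ext_hi m (t : {perm 'I_m}) i : ext t (hi i) = hi (t i).
Proof. by rewrite permE ext_fun_hi. Qed.

Definition extE := (ext_lo, ext_mid, ext_hi).

Lemma extM m (t1 t2 : {perm 'I_m}) : ext (t1 * t2)%g = (ext t1 * ext t2)%g.
Proof. by apply/permP => u; rewrite permM; case: (blockP u) => [i||i]; rewrite !extE ?permM. Qed.

Lemma ext_trivial m (t : {perm 'I_m}) : (ext t == 1%g) = (t == 1%g).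
Proof.
apply/eqP/eqP => [e | ->]; apply/permP => u; rewrite perm1.
- by apply: lo_inj; rewrite -ext_lo e perm1.
- by case: (blockP u) => [i||i]; rewrite !extE ?perm1.
Qed.

(* The automorphisms of [B1 I A A^T] are exactly the extensions of the
   automorphisms of [A]: they fix [mid], hence preserve the blocks, and an
   automorphism acts on [hi] as on [lo] because distinct vertices of a doubly
   regular tournament with [l >= 1] have distinct out-neighbourhoods. *)
Section AutIso.
Variables (m : nat) (A : 'M[int]_m) (l : int).
Hypothesis HA : doubly_regular A l.
Hypothesis Hl : 1 <= l.
Local Notation Y := (B1 1%:M A A^T).
Local Notation AutY := (AutS (fam3 1%:M Y Y^T)).
Local Notation AutX := (AutS (fam3 1%:M A A^T)).

(* Two vertices with the same out-neighbourhood coincide: otherwise they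
   would have [2l+1] common out-neighbours, whereas [drt_rows] gives [l]. *)
Lemma drt_row_inj w v : (forall z, A w z = A v z) -> w = v.
Proof.
move=> same; have := drt_rows HA w v.
have -> : \sum_z A w z * A v z = \sum_z A w z.
  by apply: eq_bigr => z _; rewrite -same tour_sqr //; exact: drt01 HA.
rewrite (drt_row HA) (drt_skew HA).
by case: (eqVneq w v) => // _ /= /eqP; lia.
Qed.

Lemma ext_aut (t : {perm 'I_m}) : t \in AutX -> ext t \in AutY.
Proof.
move/AutS_fam3P => Ht; apply/AutS_fam3P => u v.
by case: (blockP u) => [i||i]; case: (blockP v) => [j||j];
  rewrite !extE !B1E ?Ht // (inj_eq perm_inj).
Qed.

Lemma aut_ext (s : {perm 'I_(2 * m + 1)}) :
  s \in AutY -> exists2 t, t \in AutX & s = ext t.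
Proof.
move/AutS_fam3P => Hs; have s_mid := aut_fix_mid HA Hl Hs.
have s_lo i : exists j, s (lo i) = lo j.
  have := Hs (mid m) (lo i); rewrite s_mid B1_mid_lo.
  by case: (blockP (s (lo i))) => [j||j]; rewrite !B1E // => _; exists j.
pose r i := insubd i (val (s (lo i))) : 'I_m.
have s_lo_r i : s (lo i) = lo (r i).
  have [j sj] := s_lo i.
  by apply: val_inj; rewrite /r /= sj val_insubd /= ltn_ord.
have r_inj : injective r.
  by move=> i j e; apply/lo_inj/(@perm_inj _ s); rewrite !s_lo_r e.
pose t := perm r_inj.
have s_lo_t i : s (lo i) = lo (t i) by rewrite permE s_lo_r.
have t_aut i j : A (t i) (t j) = A i j.
  by rewrite -(B1_lo_lo 1%:M A A^T) -!s_lo_t Hs B1_lo_lo.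
have s_hi_t i : s (hi i) = hi (t i).
  have [w s_hi] : exists w, s (hi i) = hi w.
    have := Hs (hi i) (mid m); rewrite s_mid B1_hi_mid.
    by case: (blockP (s (hi i))) => [j||j]; rewrite !B1E // => _; exists j.
  rewrite s_hi; congr hi; apply: drt_row_inj => z.
  rewrite -(permKV t z) t_aut.
  by rewrite -(B1_hi_lo 1%:M A A^T) -s_hi -s_lo_t Hs B1_hi_lo.
exists t; first by apply/AutS_fam3P.
by apply/permP => u; case: (blockP u) => [i||i]; rewrite !extE ?s_lo_t ?s_hi_t.
Qed.

Lemma aut_B1_isog : AutY \isog AutX.
Proof.
have AutX_iso : AutX \isog AutY.
  apply: (@misom_isog _ _ _ _ (@ext m)); apply/andP; split.
    by apply/morphicP => x y _ _; rewrite extM.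
  apply/eqP/setP => s; apply/imsetP/idP.
  - by case=> t; rewrite !in_setD1 => /andP [nt /ext_aut tY] ->; rewrite tY ext_trivial nt.
  - rewrite !in_setD1 => /andP [ns /aut_ext [t tX e]].
    by exists t => //; rewrite !in_setD1 tX -ext_trivial -e ns.
exact: (@isog_symr _ _ (Group (AutS_group (fam3 1%:M A A^T)))
                        (Group (AutS_group (fam3 1%:M Y Y^T))) AutX_iso).
Qed.

End AutIso.

(* A schurian family is invariant under its defining transitive group, so an
   intransitive automorphism group rules out schurity. *)
Lemma orbital_mx_inv N (G : {group {perm 'I_N}}) x y (g : {perm 'I_N}) u v :
  g \in G -> orbital_mx G x y (g u) (g v) = orbital_mx G x y u v.
Proof.
move=> gG; rewrite !mxE; congr (_%:R); congr (nat_of_bool _).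
apply/imsetP/imsetP => [[h hG [e1 e2]] | [h hG [e1 e2]]].
- exists (h * g^-1)%g; first by rewrite groupM ?groupV.
  by rewrite !permM -e1 -e2 !permK.
- by exists (h * g)%g; rewrite ?groupM // !permM e1 e2.
Qed.

Lemma intransitive_not_schurian N d (F : 'I_d.+1 -> 'M[int]_N) :
  ~ transitive_on_points (AutS F) -> ~ schurian F.
Proof.
move=> ntr [G [Gtr Horb _]]; apply: ntr => x y.
have [g gG gx] := Gtr x y; exists g => //.
by apply/AutSP => i u v; have [a [b ->]] := Horb i; rewrite orbital_mx_inv.
Qed.

Theorem theorem4 (m : nat) (A0 A1 A2 : 'M[int]_m) :
  (7 <= m)%N ->
  nonsym_class2 A0 A1 A2 ->
  let Y1 := B1 A0 A1 A2 in
  [/\ nonsym_class2 (1%:M) Y1 Y1^T,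
      ~ transitive_on_points (AutS (fam3 (1%:M) Y1 Y1^T)),
      ~ schurian (fam3 (1%:M) Y1 Y1^T) &
      AutS (fam3 (1%:M) Y1 Y1^T) \isog AutS (fam3 A0 A1 A2)].
Proof.
move=> m7 HX Y1; rewrite /Y1.
case: (class2_drt m7 HX) => -> -> [l HA l_pos].
have i0 : 'I_m by exists 0%N; lia.
have HY := doubling_drt HA (drt_order HA i0).
have intrans := aut_B1_intransitive HA l_pos i0.
split => //.
- exact: drt_scheme HY (B1_mid_lo 1%:M A1 A1^T i0).
- exact: intransitive_not_schurian.
- exact: aut_B1_isog HA l_pos.
Qed.
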